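(* Let $C$ be a cycle (oriented or not) and let $Ck$ be a diagram obtained from $C$ by adding a new vertex $k$ adjacent to some vertices of $C$. Let $A$ be a quasi-Cartan companion of $Ck$ with $\prod_{\{i,j\}\in C}(-A_{ij})<0$. Suppose $k$ is adjacent to an even number of vertices of $C$, and among them there are two vertices that are not adjacent in $C$. Then $Ck$ contains a cycle $C'$ containing $k$ with $\prod_{\{i,j\}\in C'}(-A_{ij})>0$.
   Context: A diagram is a finite directed graph without loops or 2-cycles with positive integer edge weights such that the product of weights along each cycle is a perfect square; a cycle is an induced subgraph on $r\ge3$ vertices whose underlying graph is a cycle. A quasi-Cartan matrix is an integer matrix $A$ with diagonal entries $2$ such that $DA$ is symmetric for a diagonal $D$ with positive entries (so $\mathrm{sgn}A_{ij}=\mathrm{sgn}A_{ji}$). A quasi-Cartan companion of a diagram $\Gamma$ is a quasi-Cartan $A$ with $|A_{ij}|=|B_{ij}|$ ($i\ne j$) for a skew-symmetrizable $B$ whose diagram ($i\to j$ iff $B_{ij}>0$, weight $|B_{ij}B_{ji}|$) is $\Gamma$. *)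

From HB Require Import structures.
From mathcomp Require Import all_boot all_order all_algebra.
Set Implicit Arguments. Unset Strict Implicit. Unset Printing Implicit Defensive.
Import Order.TTheory GRing.Theory Num.Theory.
Local Open Scope ring_scope.

Definition skew_symmetrizable (n : nat) (B : 'M[int]_n) : Prop :=
  exists d : 'I_n -> int, (forall i, 0 < d i) /\
    (forall i j, d i * B i j = - (d j * B j i)).

Definition adj (n : nat) (B : 'M[int]_n) (i j : 'I_n) : bool :=
  (i != j) && (B i j != 0).

Definition is_cycle (n : nat) (B : 'M[int]_n) (S : {set 'I_n}) : Prop :=
  exists s : seq 'I_n,
    [/\ uniq s, (3 <= size s)%N, S = [set x in s] &
        forall i j, i \in S -> j \in S ->
          adj B i j = (j == next s i) || (i == next s j)].

Definition quasi_cartan (n : nat) (A : 'M[int]_n) : Prop :=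
  (forall i, A i i = 2) /\
  exists d : 'I_n -> int, (forall i, 0 < d i) /\
    (forall i j, d i * A i j = d j * A j i).

Definition qc_companion (n : nat) (B A : 'M[int]_n) : Prop :=
  quasi_cartan A /\ forall i j, i != j -> `|A i j| = `|B i j|.

Definition edge_prod (n : nat) (B A : 'M[int]_n) (S : {set 'I_n}) : int :=
  \prod_(i in S) \prod_(j in S | ((val i < val j)%N && adj B i j)) (- A i j).

(* Number the
   vertices of C cyclically as w 0, ..., w (r-1), with w 0 a neighbour of k.
   Consecutive neighbours w a, w b of k bound an arc of C, and k together
   with this arc is again an induced cycle (the non-adjacent neighbours
   guarantee that the arc is not all of C).  With e j the sign of -A along
   the edge w j -- w (j+1) and eps j the sign of -A along k -- w j, the
   sign of this cycle is eps a * (e a * ... * e (b-1)) * eps b.  Multiplying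
   over all arcs, each eps appears twice and each e once, so the product of
   the arc signs is the sign of C, namely -1; as the number of arcs is even,
   not every arc sign can be -1, and the corresponding cycle is positive. *)

From Stdlib Require Import Classical.
From HB Require Import structures.
From mathcomp Require Import all_boot all_order all_algebra zify ring.
Set Implicit Arguments. Unset Strict Implicit. Unset Printing Implicit Defensive.
Import Order.TTheory GRing.Theory Num.Theory.

Definition cyclic_nbr (m t u : nat) : bool :=
  (u == t.+1 %[mod m]) || (t == u.+1 %[mod m]).

Lemma modn_succ_small m t : t < m -> t.+1 %% m = if t.+1 == m then 0 else t.+1.
Proof.
move=> tm; case: eqP => [->|ne]; first by rewrite modnn.
by rewrite modn_small // ltn_neqAle tm andbT; apply/eqP.
Qed.

(* For positions below m, cyclic adjacency is linear arithmetic, which lets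
   lia decide it. *)
Lemma cyclic_nbr_small m t u : t < m -> u < m ->
  cyclic_nbr m t u =
  [|| u == t.+1, t == u.+1, (t.+1 == m) && (u == 0) | (u.+1 == m) && (t == 0)].
Proof.
move=> tm um; rewrite /cyclic_nbr (modn_succ_small tm) (modn_succ_small um).
by rewrite (modn_small tm) (modn_small um); case: ifP; case: ifP => *; lia.
Qed.

Lemma cyclic_nbr_addl m a t u : cyclic_nbr m (a + t) (a + u) = cyclic_nbr m t u.
Proof. by rewrite /cyclic_nbr -!addnS !eqn_modDl. Qed.

Lemma modn_succ_mod m t : (t %% m).+1 = t.+1 %[mod m].
Proof. by rewrite -[(t %% m).+1]addn1 modnDml addn1. Qed.

Lemma cyclic_nbr_mod m t u : cyclic_nbr m (t %% m) (u %% m) = cyclic_nbr m t u.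
Proof. by rewrite /cyclic_nbr !modn_mod !modn_succ_mod. Qed.

Lemma modn_addr_neq m i d : 0 < d < m -> (i + d == i %[mod m]) = false.
Proof.
case/andP=> d0 dm; rewrite -{2}[i]addn0 eqn_modDl mod0n modn_small //.
by rewrite eqn0Ngt d0.
Qed.

Lemma next_nth_uniq (T : eqType) (s : seq T) x0 i :
  uniq s -> i < size s -> next s (nth x0 s i) = nth x0 s (i.+1 %% size s).
Proof.
case: s => [|y p] // Us lti.
rewrite next_nth mem_nth // index_uniq //.
move: lti; rewrite /= ltnS leq_eqVlt => /orP[/eqP->|lt].
  by rewrite modnn /= nth_default.
by rewrite modn_small /= ?ltnS // (set_nth_default x0).
Qed.

Section Mkseq.
Variables (T : eqType) (v : nat -> T) (m : nat).
Hypothesis Uv : uniq (mkseq v m).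

Lemma mem_mkseqP x : reflect (exists2 t, t < m & x = v t) (x \in mkseq v m).
Proof.
apply: (iffP mapP) => [[t]|[t tm ->]]; last by exists t; rewrite // mem_iota.
by rewrite mem_iota => /andP[_ tm] ->; exists t.
Qed.

Lemma mkseq_inj t u : t < m -> u < m -> (v t == v u) = (t == u).
Proof.
move=> tm um; rewrite -(nth_mkseq (v 0) v tm) -(nth_mkseq (v 0) v um).
by rewrite nth_uniq ?size_mkseq.
Qed.

Lemma next_mkseq t : t < m -> next (mkseq v m) (v t) = v (t.+1 %% m).
Proof.
move=> tm; have m0 : 0 < m by apply: leq_ltn_trans tm.
by rewrite -(nth_mkseq (v 0) v tm) next_nth_uniq ?size_mkseq // nth_mkseq ?ltn_pmod.
Qed.

Lemma eq_next_mkseq t u : t < m -> u < m ->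
  (v u == next (mkseq v m) (v t)) = (u == t.+1 %[mod m]).
Proof.
move=> tm um; have m0 : 0 < m by apply: leq_ltn_trans tm.
by rewrite next_mkseq // mkseq_inj ?ltn_pmod // (modn_small um).
Qed.

Lemma big_next_mkseq (R : Type) (idx : R) (op : Monoid.com_law idx) (F : T -> T -> R) :
  \big[op/idx]_(x <- mkseq v m) F x (next (mkseq v m) x) =
  \big[op/idx]_(0 <= t < m) F (v t) (v (t.+1 %% m)).
Proof.
rewrite {1}/mkseq big_map /index_iota subn0; apply: eq_big_seq => t.
by rewrite mem_iota => /andP[_ tm]; rewrite next_mkseq.
Qed.

End Mkseq.

(* next permutes a duplicate-free sequence, so it can be used to reindex. *)
Lemma big_next (R : Type) (idx : R) (op : Monoid.com_law idx) (T : eqType)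
    (s : seq T) (F : T -> R) :
  uniq s -> \big[op/idx]_(x <- s) F (next s x) = \big[op/idx]_(x <- s) F x.
Proof.
move=> Us; rewrite -(big_map (next s) xpredT F); apply: perm_big.
apply: uniq_perm; rewrite ?map_inj_uniq //; first exact: (can_inj (prev_next Us)).
move=> y; apply/mapP/idP => [[z zs ->]|ys]; first by rewrite mem_next.
by exists (prev s y); rewrite ?mem_prev // next_prev.
Qed.

Lemma cycle_nbrs_distinct (T : eqType) (s : seq T) x :
  uniq s -> 3 <= size s -> x \in s ->
  [/\ next s x != x, prev s x != x & next s x != prev s x].
Proof.
move=> Us s3 xs; pose v i := nth x s i; set r := size s in s3 *.
have r0 : 0 < r by apply: leq_trans s3.
have Uv : uniq (mkseq v r) by rewrite /v /r mkseq_nth.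
have [i ir ->] : exists2 i, i < r & x = v i.
  by exists (index x s); rewrite ?index_mem // /v nth_index.
have nxt j : j < r -> next s (v j) = v (j.+1 %% r).
  by move=> jr; rewrite -[in next s _](mkseq_nth x s) next_mkseq.
have vmod j : (v (j %% r) == v i) = (j == i %[mod r]).
  by rewrite (mkseq_inj Uv) ?ltn_pmod // (modn_small ir).
have nn : next s (next s (v i)) != v i.
  by rewrite nxt // nxt ?ltn_pmod // vmod modn_succ_mod -addn2 modn_addr_neq.
have n1 : next s (v i) != v i.
  by rewrite nxt // vmod -addn1 modn_addr_neq //; lia.
split => //; first by apply: contra n1 => /eqP h; rewrite -{1}h next_prev.
by apply: contra nn => /eqP ->; rewrite next_prev.
Qed.

(* The cyclic reading of a sequence c, defaulting to x0 when c is empty. *)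
Definition cyc_vertex (T : Type) (x0 : T) (c : seq T) (j : nat) : T :=
  nth x0 c (j %% size c).

Section CycVertex.
Variables (T : eqType) (x0 : T) (c : seq T).
Local Notation w := (cyc_vertex x0 c).

Lemma cyc_vertex_mod j : w (j %% size c) = w j.
Proof. by rewrite /cyc_vertex modn_mod. Qed.

Lemma mkseq_cyc_vertex : mkseq w (size c) = c.
Proof.
rewrite -[RHS](mkseq_nth x0); apply/eq_in_map => j.
by rewrite mem_iota => /andP[_ jr]; rewrite /cyc_vertex modn_small.
Qed.

Lemma cyc_vertex_index x : x \in c -> w (index x c) = x.
Proof. by move=> xc; rewrite /cyc_vertex modn_small ?index_mem // nth_index. Qed.

Lemma cyc_vertex_in j : 0 < size c -> w j \in c.
Proof. by move=> c0; rewrite mem_nth // ltn_pmod. Qed.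

Lemma cyc_vertex_window a t u : uniq c -> t < size c -> u < size c ->
  (w (a + t) == w (a + u)) = (t == u).
Proof.
move=> Uc tr ur; have r0 : 0 < size c by apply: leq_ltn_trans tr.
have Uw : uniq (mkseq (nth x0 c) (size c)) by rewrite mkseq_nth.
by rewrite /cyc_vertex (mkseq_inj Uw) ?ltn_pmod // eqn_modDl !modn_small.
Qed.

End CycVertex.

Lemma card_cyc_vertex (T : finType) (x0 : T) (c : seq T) (P : pred T) : uniq c ->
  #|[set x in [set y in c] | P x]| = \sum_(0 <= j < size c) P (cyc_vertex x0 c j).
Proof.
move=> Uc; rewrite -sum1_card (eq_bigl (fun x => (x \in c) && P x)) => [|x].
  rewrite big_mkcondr -big_uniq // -{1}(mkseq_cyc_vertex x0 c) /mkseq big_map.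
  by rewrite /index_iota subn0; apply: eq_bigr => j _; case: (P _).
by rewrite !inE.
Qed.

(* N marks the neighbours of k along the cycle, e j is
   the sign of the cycle edge j -- j+1 and eps j the sign of the edge from k
   to position j; only eps j ^ 2 = 1 at neighbours is used. *)
Section ArcSigns.
Local Open Scope ring_scope.
Variables (R : comPzRingType) (N : nat -> bool) (e eps : nat -> R).
Hypothesis eps_sq : forall j, N j -> eps j * eps j = 1.

Definition consecutive (a b : nat) : Prop :=
  [/\ (a < b)%N, N a, N b & forall j, (a < j < b)%N -> ~~ N j].

(* The sign of the cycle formed by k and the arc from a to b. *)
Definition arc_sign (a b : nat) : R := eps a * \prod_(a <= j < b) e j * eps b.

Lemma count_consecutive a b : consecutive a b ->
  (\sum_(0 <= j < b) N j = (\sum_(0 <= j < a) N j).+1)%N.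
Proof.
case=> ab Na _ mid; have gap0 : (\sum_(a.+1 <= j < b) N j = 0)%N.
  by rewrite big_nat_cond big1 // => j /andP[aj _]; rewrite (negbTE (mid j aj)).
by rewrite (big_cat_nat (leq0n a) (ltnW ab)) (big_ltn ab) /= Na gap0 addn1.
Qed.

Lemma arc_sign_cat a p b : N p -> (a <= p <= b)%N ->
  arc_sign a b = arc_sign a p * arc_sign p b.
Proof.
move=> Np /andP[ap pb]; rewrite /arc_sign (big_cat_nat ap pb) /=.
set P1 := \prod_(a <= j < p) e j; set P2 := \prod_(p <= j < b) e j.
rewrite [RHS](_ : _ = eps a * P1 * (eps p * eps p) * P2 * eps b); last by ring.
by rewrite eps_sq // mulr1 mulrA.
Qed.

Lemma arc_sign_sq a b : N a -> N b -> (forall j, e j * e j = 1) ->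
  arc_sign a b * arc_sign a b = 1.
Proof.
move=> Na Nb e_sq; set P := \prod_(a <= j < b) e j.
have P_sq : P * P = 1 by rewrite /P -big_split big1 // => j _; apply: e_sq.
rewrite /arc_sign -/P (_ : _ * _ = eps a * eps a * (P * P) * (eps b * eps b)).
  by rewrite P_sq !eps_sq // !mulr1.
by ring.
Qed.

Lemma prev_consecutive c : N 0 -> (0 < c)%N -> N c -> exists p, consecutive p c.
Proof.
move=> N0 c0 Nc; have ex : exists i, (i < c)%N && N i by exists 0%N; rewrite c0.
have ub i : (i < c)%N && N i -> (i <= c)%N by case/andP=> /ltnW.
case: (ex_maxnP ex ub) => p /andP[pc Np] pmax; exists p; split => // j /andP[pj jc].
by apply/negP => Nj; have := pmax j; rewrite jc Nj leqNgt pj => /(_ isT).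
Qed.

Lemma arc_sign_invariant r : N 0 ->
  (forall a b, consecutive a b -> (b <= r)%N -> arc_sign a b = -1) ->
  forall c, (c <= r)%N -> N c -> arc_sign 0 c = (-1) ^+ (\sum_(0 <= j < c) N j).
Proof.
move=> N0 Harc; elim/ltn_ind => c IH cr Nc.
have [->|c0] := posnP c; first by rewrite /arc_sign !big_geq // mulr1 eps_sq.
have [p pc] := prev_consecutive N0 c0 Nc; have [ltpc Np _ _] := pc.
rewrite (arc_sign_cat Np (ltnW ltpc : (0 <= p <= c)%N)).
by rewrite IH ?(ltnW (leq_trans ltpc cr)) // Harc // (count_consecutive pc) exprS mulrC.
Qed.

Lemma exists_arc_sign_neq r : N 0 -> N r -> eps r = eps 0 ->
  ~~ odd (\sum_(0 <= j < r) N j) -> \prod_(0 <= j < r) e j != 1 ->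
  exists a b, [/\ consecutive a b, (b <= r)%N & arc_sign a b != -1].
Proof.
move=> N0 Nr eps_r even Q1; apply: NNPP => none.
have Harc a b : consecutive a b -> (b <= r)%N -> arc_sign a b = -1.
  move=> ab br; case: (eqVneq (arc_sign a b) (-1)) => // ne.
  by case: none; exists a, b.
move: (arc_sign_invariant N0 Harc (leqnn r) Nr).
rewrite -signr_odd (negbTE even) expr0 /arc_sign eps_r mulrAC eps_sq // mul1r.
by move/eqP; rewrite (negbTE Q1).
Qed.

End ArcSigns.

Lemma consecutive_mem (N : nat -> bool) a b j : consecutive N a b -> a <= j <= b ->
  N j = (j == a) || (j == b).
Proof.
case=> ab Na Nb mid ajb; have [-> | ja] := eqVneq j a; first by rewrite Na.
have [-> | jb] := eqVneq j b; first by rewrite Nb orbT.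
by apply/negbTE/mid; lia.
Qed.

Lemma consecutive_short (N : nat -> bool) r a b : consecutive N a b -> b <= r ->
  (exists i j, [/\ (i < r) && (j < r), i != j, N i, N j & ~~ cyclic_nbr r i j]) ->
  (b - a).+2 <= r.
Proof.
case=> ab _ _ mid br [i [j [/andP[ir jr] ij Ni Nj]]]; rewrite cyclic_nbr_small // => nij.
have := contraL (mid i) Ni; have := contraL (mid j) Nj; lia.
Qed.

Local Open Scope ring_scope.

Definition induced_cycle (n : nat) (B : 'M[int]_n) (s : seq 'I_n) : Prop :=
  [/\ uniq s, (3 <= size s)%N &
      forall x y, x \in s -> y \in s -> adj B x y = (y == next s x) || (x == next s y)].

Lemma is_cycleP (n : nat) (B : 'M[int]_n) (S : {set 'I_n}) :
  is_cycle B S <-> exists2 s, induced_cycle B s & S = [set x in s].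
Proof.
split => [[s [Us s3 -> Hs]]|[s [Us s3 Hs] ->]]; exists s => //.
  by split => // x y xs ys; apply: Hs; rewrite inE.
by split => // x y; rewrite !inE; apply: Hs.
Qed.

Lemma induced_cycle_rooted (n : nat) (B : 'M[int]_n) (S : {set 'I_n}) x0 :
  is_cycle B S -> x0 \in S -> exists t, induced_cycle B (x0 :: t) /\ S = [set x in x0 :: t].
Proof.
move=> /is_cycleP[s [Us s3 Hs] ->]; rewrite inE => /rot_to[i t rot_s]; exists t.
rewrite -rot_s; split; last by apply/setP => x; rewrite !inE mem_rot.
split; rewrite ?rot_uniq ?size_rot // => x y.
by rewrite !mem_rot !(next_rot _ Us); apply: Hs.
Qed.

Lemma adj_induced_cycle (n : nat) (B : 'M[int]_n) (s : seq 'I_n) x y :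
  induced_cycle B s -> x \in s -> y \in s ->
  adj B x y = (y == next s x) || (y == prev s x).
Proof.
case=> Us _ Hs xs ys; rewrite Hs //; congr (_ || _).
by apply/eqP/eqP => [->|->]; rewrite ?prev_next ?next_prev.
Qed.

Lemma mkseq_induced_cycleP (n : nat) (B : 'M[int]_n) (v : nat -> 'I_n) m :
  (3 <= m)%N -> uniq (mkseq v m) ->
  induced_cycle B (mkseq v m) <->
  (forall t u, (t < m)%N -> (u < m)%N -> adj B (v t) (v u) = cyclic_nbr m t u).
Proof.
move=> m3 Uv; have vm t : (t < m)%N -> v t \in mkseq v m.
  by move=> tm; apply/mem_mkseqP; exists t.
split => [[_ _ Hadj] t u tm um | Hadj].
  by rewrite Hadj ?vm // !eq_next_mkseq.
split; rewrite ?size_mkseq // => x y /mem_mkseqP[t tm ->] /mem_mkseqP[u um ->].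
by rewrite !eq_next_mkseq // Hadj.
Qed.

Lemma adj_sym (n : nat) (B : 'M[int]_n) :
  skew_symmetrizable B -> forall x y, adj B x y = adj B y x.
Proof.
move=> [d [dpos Hd]] x y; rewrite /adj eq_sym; congr (_ && ~~ _).
move: (congr1 (eq_op^~ 0) (Hd x y)) => /=.
by rewrite oppr_eq0 !mulf_eq0 !(gt_eqF (dpos _)).
Qed.

Lemma sgz_sym (n : nat) (A : 'M[int]_n) :
  quasi_cartan A -> forall x y, sgz (A x y) = sgz (A y x).
Proof.
move=> [_ [d [dpos Hd]]] x y; have := congr1 (@sgz _) (Hd x y).
by rewrite !sgzM (gtr0_sgz (dpos x)) (gtr0_sgz (dpos y)) !mul1r.
Qed.

Lemma sgz_edge_sq (n : nat) (B A : 'M[int]_n) x y :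
  qc_companion B A -> adj B x y -> sgz (- A x y) * sgz (- A x y) = 1.
Proof.
move=> [_ HA] /andP[xy Bxy]; rewrite mulz_sg oppr_eq0.
by rewrite -normr_eq0 HA // normr_eq0 Bxy.
Qed.

Lemma sgz_prod (I : Type) (r : seq I) (P : pred I) (F : I -> int) :
  sgz (\prod_(i <- r | P i) F i) = \prod_(i <- r | P i) sgz (F i).
Proof. exact: (big_morph _ (@sgzM _) (sgz1 _)). Qed.

(* The sign of edge_prod over an induced cycle is the product of the signs
   along the edges x -- next x of any enumeration: each vertex contributes
   the edges to its two cyclic neighbours that have a larger index. *)
Lemma edge_sign (n : nat) (B A : 'M[int]_n) (s : seq 'I_n) :
  (forall x y, sgz (A x y) = sgz (A y x)) -> induced_cycle B s ->
  sgz (edge_prod B A [set x in s]) = \prod_(x <- s) sgz (- A x (next s x)).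
Proof.
move=> Asym Cs; have [Us s3 _] := Cs.
pose h x y := if (val x < val y)%N then sgz (- A x y) else 1.
have inner x : x \in s ->
    sgz (\prod_(j in [set y in s] | (val x < val j)%N && adj B x j) - A x j)
    = h x (next s x) * h x (prev s x).
  move=> xs; have [nx px np] := cycle_nbrs_distinct Us s3 xs.
  rewrite sgz_prod big_mkcond (bigD1 (next s x)) // (bigD1 (prev s x)) 1?eq_sym //=.
  rewrite big1 ?mulr1 => [|j /andP[jn jp]].
    rewrite !inE mem_next mem_prev xs !(adj_induced_cycle Cs) ?mem_next ?mem_prev //.
    by rewrite !eqxx ?orbT !andbT.
  rewrite inE; case: ifP => // /andP[js /andP[_]].
  by rewrite (adj_induced_cycle Cs) // (negbTE jn) (negbTE jp).
have pair x y : x != y -> h x y * h y x = sgz (- A x y).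
  rewrite /h => xy; case: ltngtP => [||/val_inj e]; rewrite ?mulr1 ?mul1r //.
    by rewrite !sgzN Asym.
  by rewrite e eqxx in xy.
rewrite /edge_prod sgz_prod (eq_bigl (fun x => x \in s)) => [|x]; last by rewrite inE.
rewrite -big_uniq //= (eq_big_seq _ inner) big_split /=.
rewrite -[X in _ * X](big_next _ (fun x => h x (prev s x))) // -big_split /=.
apply: eq_big_seq => x xs; rewrite prev_next // pair //.
by have [] := cycle_nbrs_distinct Us s3 xs; rewrite eq_sym.
Qed.

Lemma sign_eq1 (x : int) : x * x = 1 -> x != -1 -> x = 1.
Proof.
move=> xx; have := sqrf_eq1 x; rewrite expr2 xx eqxx => /esym/orP[/eqP // | /eqP ->].
by rewrite eqxx.
Qed.

Definition arc_vertex (T : Type) (k : T) (c : seq T) (a t : nat) : T :=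
  if t is t'.+1 then cyc_vertex k c (a + t') else k.

Section CycleArcs.
Variables (n : nat) (B : 'M[int]_n) (k : 'I_n) (c : seq 'I_n).
Hypotheses (Cc : induced_cycle B c) (kNc : k \notin c)
           (adjC : forall x y, adj B x y = adj B y x).

Local Notation r := (size c).
Local Notation w := (cyc_vertex k c).
Local Notation N := (fun j => adj B k (w j)).

Lemma adj_cyc_vertex i j : adj B (w i) (w j) = cyclic_nbr r i j.
Proof.
have [Uc c3 _] := Cc; have Uw : uniq (mkseq (nth k c) r) by rewrite mkseq_nth.
have Hadj := (mkseq_induced_cycleP B c3 Uw).1.
by rewrite /cyc_vertex Hadj ?mkseq_nth ?ltn_pmod ?(leq_trans _ c3) // cyclic_nbr_mod.
Qed.

(* k followed by fewer than size c consecutive vertices of c has no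
   repetition; size c occurs at two coercion types below, so the bounds are
   derived from mr before calling lia. *)
Lemma arc_uniq a m : (m < r)%N -> uniq (mkseq (arc_vertex k c a) m.+1).
Proof.
have [Uc c3 _] := Cc; have r0 : (0 < r)%N by apply: leq_trans c3.
move=> mr; rewrite /mkseq map_inj_in_uniq ?iota_uniq // => t u.
rewrite !mem_iota /= => tm um; case: t tm => [|t] tm; case: u um => [|u] um //=.
- by move=> e; move: kNc; rewrite e cyc_vertex_in.
- by move=> e; move: kNc; rewrite -e cyc_vertex_in.
- move/eqP; rewrite cyc_vertex_window //; first by move/eqP=> ->.
  all: by apply: (leq_trans _ mr); lia.
Qed.

Lemma arc_induced_cycle a b : consecutive N a b ->
  ((b - a).+2 <= r)%N -> induced_cycle B (mkseq (arc_vertex k c a) (b - a).+2).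
Proof.
move=> abN short; have [ab _ _ _] := abN.
apply/mkseq_induced_cycleP; [lia | exact: arc_uniq | ].
move=> [|t] [|u] tm um /=.
- by rewrite /adj eqxx cyclic_nbr_small //; lia.
- by rewrite (consecutive_mem abN) ?cyclic_nbr_small //; lia.
- by rewrite adjC (consecutive_mem abN) ?cyclic_nbr_small //; lia.
- by rewrite adj_cyc_vertex cyclic_nbr_addl !cyclic_nbr_small //; lia.
Qed.

Lemma arc_prod (R : comPzSemiRingType) (F : 'I_n -> 'I_n -> R) a b :
  (a < b)%N -> ((b - a).+2 <= r)%N ->
  \prod_(x <- mkseq (arc_vertex k c a) (b - a).+2)
     F x (next (mkseq (arc_vertex k c a) (b - a).+2) x)
  = F k (w a) * \prod_(a <= j < b) F (w j) (w j.+1) * F (w b) k.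
Proof.
move=> ab short; rewrite (big_next_mkseq (arc_uniq _ short)).
rewrite big_nat_recl // big_nat_recr //= addn0 subnKC ?(ltnW ab) // modnn mulrA.
congr (_ * _ * _); symmetry; rewrite -{1}[a]add0n big_addn; apply: eq_big_nat => t tba.
by rewrite modn_small /= ?addnS 1?addnC //; lia.
Qed.

Lemma consecutive_arc_short a b x y : consecutive N a b -> (b <= r)%N ->
  x \in c -> y \in c -> x != y -> adj B k x -> adj B k y -> ~~ adj B x y ->
  ((b - a).+2 <= r)%N.
Proof.
move=> abN br xc yc xy Nx Ny nxy; apply: (consecutive_short abN br).
exists (index x c), (index y c).
rewrite !index_mem xc yc -adj_cyc_vertex !cyc_vertex_index //; split => //.
by apply: contra xy => /eqP e; rewrite -(cyc_vertex_index k xc) e cyc_vertex_index.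
Qed.

Section Signs.
Variable A : 'M[int]_n.
Hypothesis compAB : qc_companion B A.

Local Notation e := (fun j => sgz (- A (w j) (w j.+1))).
Local Notation eps := (fun j => sgz (- A k (w j))).

Lemma cycle_edge_sign : sgz (edge_prod B A [set x in c]) = \prod_(0 <= j < r) e j.
Proof.
have Uw : uniq (mkseq w r) by rewrite mkseq_cyc_vertex; case: Cc.
rewrite (edge_sign (sgz_sym compAB.1) Cc) -[in LHS](mkseq_cyc_vertex k c).
rewrite (big_next_mkseq Uw _ (fun x y => sgz (- A x y))).
by apply: eq_bigr => j _; rewrite cyc_vertex_mod.
Qed.

(* The sign of an arc cycle is its arc_sign (using sign symmetry at the
   edge w b -- k). *)
Lemma arc_edge_sign a b : consecutive N a b -> ((b - a).+2 <= r)%N ->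
  sgz (edge_prod B A [set x in mkseq (arc_vertex k c a) (b - a).+2]) =
  arc_sign e eps a b.
Proof.
move=> abN short; have [ab _ _ _] := abN; have Asym := sgz_sym compAB.1.
rewrite (edge_sign Asym (arc_induced_cycle abN short)).
rewrite (arc_prod (fun x y => sgz (- A x y)) ab short) /arc_sign.
by rewrite [sgz (- A (w b) k)]sgzN Asym -sgzN.
Qed.

Lemma exists_nonnegative_arc : adj B k (w 0) ->
  ~~ odd #|[set x in [set y in c] | adj B k x]| -> edge_prod B A [set x in c] < 0 ->
  exists a b, [/\ consecutive N a b, (b <= r)%N & arc_sign e eps a b != -1].
Proof.
move=> N0 even neg; have wr : w r = w 0 by rewrite -cyc_vertex_mod modnn.
have [Uc _ _] := Cc.
apply: (exists_arc_sign_neq (fun j => sgz_edge_sq compAB)); rewrite /= ?wr //.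
  by rewrite -(card_cyc_vertex k _ Uc).
by rewrite -cycle_edge_sign (ltr0_sgz neg).
Qed.

Lemma arc_cycle_positive a b : consecutive N a b -> ((b - a).+2 <= r)%N ->
  arc_sign e eps a b != -1 ->
  0 < edge_prod B A [set x in mkseq (arc_vertex k c a) (b - a).+2].
Proof.
move=> abN short sgn; have [_ Na Nb _] := abN.
have e_sq j : e j * e j = 1.
  by apply: sgz_edge_sq compAB _; rewrite adj_cyc_vertex /cyclic_nbr eqxx.
rewrite -sgz_gt0 (arc_edge_sign abN short) (sign_eq1 _ sgn) //.
exact: (arc_sign_sq (fun j => sgz_edge_sq compAB) Na Nb e_sq).
Qed.

End Signs.

End CycleArcs.

Theorem mainTheorem14 (n : nat) (B A : 'M[int]_n) (k : 'I_n) :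
  skew_symmetrizable B ->
  is_cycle B [set~ k] ->
  qc_companion B A ->
  edge_prod B A [set~ k] < 0 ->
  ~~ odd #|[set i in [set~ k] | adj B k i]| ->
  (exists i j, [/\ i \in [set~ k], j \in [set~ k], i != j,
                   adj B k i & adj B k j] /\ ~~ adj B i j) ->
  exists C' : {set 'I_n},
    [/\ k \in C', is_cycle B C' & 0 < edge_prod B A C'].
Proof.
move=> skewB Ck compAB neg even [x0 [y0 [[x0k y0k x0y0 Nx0 Ny0] nadj]]].
have [t [Cc Sk]] := induced_cycle_rooted Ck x0k.
set c := x0 :: t in Cc Sk.
have kNc : k \notin c by move: (setC11 k); rewrite Sk inE => ->.
have adjC := adj_sym skewB.
rewrite Sk in neg even x0k y0k; rewrite !inE in x0k y0k.
have N0 : adj B k (cyc_vertex k c 0) by rewrite /cyc_vertex mod0n.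
have [a [b [abN br sgn]]] := exists_nonnegative_arc Cc compAB N0 even neg.
have short := consecutive_arc_short Cc abN br x0k y0k x0y0 Nx0 Ny0 nadj.
exists [set x in mkseq (arc_vertex k c a) (b - a).+2]; split.
- by rewrite inE; apply/mem_mkseqP; exists 0%N.
- by apply/is_cycleP; exists (mkseq (arc_vertex k c a) (b - a).+2); first exact: arc_induced_cycle.
- exact: arc_cycle_positive.
Qed.
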